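(* For all positive integers $\Delta$ and positive reals $\xi$ there are positive constants $\nu$ and $c$ such that if $p\ge c(\log n/n)^{1/\Delta}$, then the following holds a.a.s. for $\Gamma=G(n,p)$ on vertex set $V$. Let $X$ be any subset of $V$ and $\mathcal{F}$ any family of pairwise disjoint $\Delta$-sets in $V\setminus X$. If $|X|\le\nu np^\Delta|\mathcal{F}|$ and $|X|,|\mathcal{F}|\le\xi n$, then $\mathrm{stars}_\Gamma(X,\mathcal{F})\le p^\Delta|X||\mathcal{F}|+6\xi np^\Delta|\mathcal{F}|$.
   Context: $G(n,p)$ is the random graph on $[n]$ with edges present independently with probability $p$; a.a.s. means with probability tending to $1$ as $n\to\infty$ (simultaneously for all such $X,\mathcal{F}$). For a graph $G$, a vertex set $X$ and a family $\mathcal{F}$ of pairwise disjoint $\ell$-sets outside $X$, $\mathrm{stars}_G(X,\mathcal{F})$ is the number of pairs $(x,F)$ with $x\in X$, $F\in\mathcal{F}$ and $F\subseteq N_G(x)$. *)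

From HB Require Import structures.
From mathcomp Require Import all_boot all_order all_algebra.
From mathcomp Require Import all_classical all_reals all_analysis.
Set Implicit Arguments. Unset Strict Implicit. Unset Printing Implicit Defensive.
Import Order.TTheory GRing.Theory Num.Theory.
Local Open Scope ring_scope.

Definition pairs (n : nat) : {set {set 'I_n}} := [set e : {set 'I_n} | #|e| == 2%N].

Definition is_graph (n : nat) (E : {set {set 'I_n}}) : bool := E \subset pairs n.

Definition gnp_weight (R : realType) (n : nat) (p : R) (E : {set {set 'I_n}}) : R :=
  p ^+ #|E| * (1 - p) ^+ (#|pairs n| - #|E|).

Definition gnp_prob (R : realType) (n : nat) (p : R)
    (A : {set {set 'I_n}} -> bool) : R :=
  \sum_(E : {set {set 'I_n}} | is_graph E && A E) gnp_weight p E.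

Definition nbhd (n : nat) (E : {set {set 'I_n}}) (x : 'I_n) : {set 'I_n} :=
  [set y | [set x; y] \in E].

Definition stars (n : nat) (E : {set {set 'I_n}}) (X : {set 'I_n})
    (F : {set {set 'I_n}}) : nat :=
  #|[set xF : 'I_n * {set 'I_n} | (xF.1 \in X) && (xF.2 \in F)
                                   && (xF.2 \subset nbhd E xF.1)]|.

Definition stars_good (R : realType) (Delta : nat) (nu xi p : R) (n : nat)
    (E : {set {set 'I_n}}) : bool :=
  [forall X : {set 'I_n}, forall F : {set {set 'I_n}},
     ([forall f in F, (#|f| == Delta) && [disjoint f & X]] && finset.trivIset F
      && (#|X|%:R <= nu * n%:R * p ^+ Delta * #|F|%:R)
      && (#|X|%:R <= xi * n%:R) && (#|F|%:R <= xi * n%:R))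
     ==> ((stars E X F)%:R <= p ^+ Delta * #|X|%:R * #|F|%:R
                              + 6 * xi * n%:R * p ^+ Delta * #|F|%:R)].

From HB Require Import structures.
From mathcomp Require Import all_boot all_order all_algebra.
From mathcomp Require Import all_classical all_reals all_analysis.
From mathcomp Require Import ring lra.
Import Order.TTheory GRing.Theory Num.Theory.
Import numFieldNormedType.Exports.
Import mathcomp.boot.fintype mathcomp.boot.finset.
Set Implicit Arguments. Unset Strict Implicit. Unset Printing Implicit Defensive.
Local Open Scope ring_scope.

(* A first-moment argument.  If the bound fails for [X] and [F], the graph
   contains a set [S] of [s = floor (6 xi n p^Delta |F|) + 1] stars [(x, f)],
   [x \in X], [f \in F], [f \subset N(x)].  As the sets of [F] are disjoint
   and avoid [X], the [Delta s] edges [xy], [y \in f], of these stars are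
   distinct, so a fixed [S] is present with probability [p^(Delta s)].  With
   [|X| = k] and [|F| = m], the union bound over [X], [F] and [S] gives a term
   [C(n, k) C(C(n, Delta), m) C(k m, s) p^(Delta s)]; using
   [C(N, s) <= (4 N / s)^s], [k <= nu n p^Delta m] and
   [n p^Delta >= c^Delta log n], it is at most [2 n^-2 2^-m], so the failure
   probability is at most [8 / n]. *)

Lemma ler_sum_predW (R : numDomainType) (I : finType) (P Q : pred I) (f : I -> R) :
  (forall i, P i -> Q i) -> (forall i, Q i -> 0 <= f i) ->
  \sum_(i | P i) f i <= \sum_(i | Q i) f i.
Proof.
move=> PQ f0; rewrite [\sum_(i | Q i) _](bigID P) /=.
rewrite (eq_bigl P) => [|i]; last by case Pi: (P i); rewrite ?andbT ?andbF ?PQ.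
by rewrite lerDl sumr_ge0 // => i /andP[Qi _]; exact: f0.
Qed.

Lemma ler_sum_term (R : numDomainType) (I : finType) (P : pred I) (f : I -> R) i :
  P i -> (forall j, P j -> 0 <= f j) -> f i <= \sum_(j | P j) f j.
Proof.
move=> Pi f0; rewrite (bigD1 i) //= lerDl sumr_ge0 // => j /andP[Pj _].
exact: f0.
Qed.

Section GnpProbability.
Variables (R : realType) (n : nat) (p : R).
Hypothesis p01 : 0 <= p <= 1.
Local Notation graph := {set {set 'I_n}}.

Lemma gnp_weight_ge0 (E : graph) : 0 <= gnp_weight p E.
Proof.
case/andP: p01 => p0 p1.
by rewrite /gnp_weight mulr_ge0 // exprn_ge0 // subr_ge0.
Qed.

Lemma gnp_prob_ge0 (A : graph -> bool) : 0 <= gnp_prob p A.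
Proof. by rewrite sumr_ge0 // => E _; exact: gnp_weight_ge0. Qed.

(* Expand [\prod_e (p + (1 - p))] over the potential edges [e]; the monomials
   that survive are exactly the weights of the graphs containing [T]. *)
Lemma gnp_prob_supset (T : graph) : T \subset pairs n ->
  gnp_prob p (fun E => T \subset E) = p ^+ #|T|.
Proof.
move=> TP.
pose F e : R := if e \in pairs n then p else 0.
pose G e : R := if e \in pairs n then (if e \in T then 0 else 1 - p) else 1.
have <- : \prod_e (F e + G e) = p ^+ #|T|.
  rewrite -prodr_const [RHS]big_mkcond /=; apply: eq_bigr => e _.
  rewrite /F /G; case: ifP => eP; case: ifP => eT //.
  - by rewrite addr0.
  - by rewrite addrC subrK.
  - by rewrite (subsetP TP) in eP.
  - by rewrite add0r.
rewrite bigA_distr /gnp_prob (big_mkcond (fun E => is_graph E && (T \subset E))) /=.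
apply: eq_bigr => J _; case: ifP => [/andP[JP TJ] | notJ].
- rewrite /gnp_weight (bigID (fun i => i \in J)) /=.
  rewrite (eq_bigr (fun _ => p)) => [|i iJ]; last by rewrite iJ /F (subsetP JP).
  rewrite prodr_const (bigID (fun i => i \in pairs n)) /=.
  rewrite [X in _ * (_ * X)](eq_bigr (fun _ => 1)) => [|i /andP[/negbTE iJ /negbTE iP]];
    last by rewrite iJ /G iP.
  rewrite big1_eq mulr1 (eq_bigr (fun _ => 1 - p)) => [|i /andP[/negbTE iJ iP]]; last first.
    by rewrite iJ /G iP; case: ifP => // iT; rewrite (subsetP TJ) in iJ.
  rewrite prodr_const; congr (_ * _ ^+ _).
  rewrite -(cardsID J (pairs n)) (setIidPr JP) addKn.
  by apply: eq_card => i; rewrite in_setD.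
- have [i Ji0] : exists i, (if i \in J then F i else G i) = 0.
    move: notJ; rewrite /is_graph; case: (boolP (J \subset pairs n)) => JP /=.
      move/negbT/subsetPn => [i iT iJ]; exists i.
      by rewrite (negbTE iJ) /G (subsetP TP) // iT.
    by move/subsetPn: JP => [i iJ iP] _; exists i; rewrite iJ /F (negbTE iP).
  by rewrite (bigD1 i) //= Ji0 mul0r.
Qed.

Lemma gnp_probT : gnp_prob p (fun _ : graph => true) = 1.
Proof.
have := gnp_prob_supset (sub0set (pairs n)); rewrite cards0 expr0 => <-.
by apply: eq_bigl => E; rewrite sub0set.
Qed.

Lemma gnp_probC (A : graph -> bool) :
  gnp_prob p A = 1 - gnp_prob p (fun E => ~~ A E).
Proof.
rewrite -gnp_probT /gnp_prob [X in _ = X - _](eq_bigl (@is_graph n)) => [|E]; last first.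
  by rewrite andbT.
by rewrite [X in _ = X - _](bigID A) /= addrK.
Qed.

Lemma gnp_prob_union_le (I : finType) (P : pred I) (A : I -> graph -> bool)
    (B : graph -> bool) :
  (forall E, is_graph E -> B E -> exists2 i, P i & A i E) ->
  gnp_prob p B <= \sum_(i | P i) gnp_prob p (A i).
Proof.
move=> cover; have w0 := gnp_weight_ge0.
apply: (@le_trans _ _
  (\sum_(E | is_graph E && B E) \sum_(i | P i && A i E) gnp_weight p E)).
  apply: ler_sum => E /andP[gE BE]; have [i Pi AiE] := cover E gE BE.
  by apply: (ler_sum_term (f := fun=> gnp_weight p E) (i := i)); rewrite ?Pi ?AiE.
apply: le_trans (ler_sum_predW (Q := @is_graph n) _ _) _.
- by move=> E /andP[].
- by move=> E _; rewrite sumr_ge0.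
rewrite (exchange_big_dep P) => [|E i _ /andP[]//] /=.
apply: ler_sum => i Pi; rewrite [leLHS](eq_bigl (fun E => is_graph E && A i E)) // => E.
by rewrite Pi.
Qed.

End GnpProbability.

Section StarEdges.
Variables (n Delta : nat).
Local Notation V := 'I_n.
Local Notation star := (V * {set V})%type.

Definition starset (E : {set {set V}}) (X : {set V}) (F : {set {set V}}) : {set star} :=
  [set xf : star | (xf.1 \in X) && (xf.2 \in F) && (xf.2 \subset nbhd E xf.1)].

Lemma starset_subX E X F : starset E X F \subset setX X F.
Proof. by apply/subsetP => xf; rewrite !inE => /andP[/andP[-> ->] _]. Qed.

Definition spokes (S : {set star}) : {set star * V} :=
  [set sy : star * V | (sy.1 \in S) && (sy.2 \in sy.1.2)].

Definition spoke_edges (S : {set star}) : {set {set V}} :=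
  [set [set sy.1.1; sy.2] | sy in spokes S].

Definition star_family (X : {set V}) (F : {set {set V}}) : bool :=
  [forall f in F, (#|f| == Delta) && [disjoint f & X]] && trivIset F.

Lemma card_spokes (S : {set star}) : {in S, forall xf : star, #|xf.2| = Delta} ->
  #|spokes S| = (#|S| * Delta)%N.
Proof.
move=> SDelta; rewrite -sum_nat_const.
rewrite (eq_bigr (fun xf : star => \sum_(y in xf.2) 1)%N) => [|xf xfS]; last first.
  by rewrite sum1_card SDelta.
rewrite pair_big_dep /= -sum1_card.
by apply: eq_bigl => sy; rewrite inE.
Qed.

Lemma star_family_notin X F f y : star_family X F -> f \in F -> y \in f -> y \notin X.
Proof.
case/andP => /forall_inP famF _ fF yf.
by case/andP: (famF f fF) => _ fX; rewrite (disjointFr fX yf).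
Qed.

(* The edge [[x; y]] of a spoke determines it: [y \notin X] singles out [x],
   and the disjointness of [F] then singles out [f]. *)
Lemma card_spoke_edges X F (S : {set star}) : star_family X F -> S \subset setX X F ->
  #|spoke_edges S| = (#|S| * Delta)%N.
Proof.
move=> famF SXF.
have inXF xf : xf \in S -> (xf.1 \in X) && (xf.2 \in F).
  by move=> xfS; have := subsetP SXF xf xfS; rewrite inE.
rewrite -card_spokes => [|xf /inXF /andP[_ fF]]; last first.
  by case/andP: famF => /forall_inP famF _; case/andP: (famF _ fF) => /eqP.
apply: card_in_imset => -[[x f] y] [[x' f'] y']; rewrite !inE /=.
move=> /andP[xfS yf] /andP[xf'S y'f'] exy.
have /andP[xX fF] := inXF _ xfS; have /andP[x'X f'F] := inXF _ xf'S.
have yX := star_family_notin famF fF yf.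
have y'X := star_family_notin famF f'F y'f'.
have : x' \in [set x; y] by rewrite exy !inE eqxx.
rewrite !inE => /orP[/eqP ex | /eqP ey]; last by rewrite -ey x'X in yX.
subst x'; have : y \in [set x; y'] by rewrite -exy !inE eqxx orbT.
rewrite !inE => /orP[/eqP ey | /eqP ey]; first by rewrite ey xX in yX.
subst y'; have [->|ff'] := eqVneq f f' => //.
case/andP: famF => _ /trivIsetP /(_ _ _ fF f'F ff') ff'_disj.
by rewrite (disjointFr ff'_disj yf) in y'f'.
Qed.

Lemma spoke_edges_pairs X F (S : {set star}) : star_family X F -> S \subset setX X F ->
  spoke_edges S \subset pairs n.
Proof.
move=> famF SXF; apply/subsetP => e /imsetP[[[x f] y] /=].
rewrite inE /= => /andP[xfS yf] ->.
have := subsetP SXF _ xfS; rewrite inE /= => /andP[xX fF].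
rewrite inE cards2; case: (eqVneq x y) => [exy|//].
by have := star_family_notin famF fF yf; rewrite -exy xX.
Qed.

Lemma spoke_edges_sub E X F (S : {set star}) : S \subset starset E X F ->
  spoke_edges S \subset E.
Proof.
move=> SE; apply/subsetP => e /imsetP[[[x f] y] /=].
rewrite inE /= => /andP[xfS yf] ->.
have := subsetP SE _ xfS; rewrite inE /= => /andP[_ /subsetP/(_ y yf)].
by rewrite inE.
Qed.

End StarEdges.

Lemma exists_subset_card (T : finType) (A : {set T}) k : (k <= #|A|)%N ->
  exists2 B : {set T}, B \subset A & #|B| = k.
Proof.
move=> kA; have : (0 < #|[set B : {set T} | B \subset A & #|B| == k]|)%N.
  by rewrite cards_draws bin_gt0.
by case/card_gt0P => B; rewrite inE => /andP[BA /eqP cB]; exists B.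
Qed.

Section FirstMoment.
Variables (R : realType) (n Delta : nat) (p nu xi : R).
Hypotheses (p01 : 0 <= p <= 1) (xi0 : 0 <= xi).
Local Notation star := ('I_n * {set 'I_n})%type.

Definition stars_premise (X : {set 'I_n}) (F : {set {set 'I_n}}) : bool :=
  [forall f in F, (#|f| == Delta) && [disjoint f & X]] && trivIset F
  && (#|X|%:R <= nu * n%:R * p ^+ Delta * #|F|%:R)
  && (#|X|%:R <= xi * n%:R) && (#|F|%:R <= xi * n%:R).

Definition stars_slack (m : nat) : R := 6 * xi * n%:R * p ^+ Delta * m%:R.

Definition stars_excess (m : nat) : nat := (Num.truncn (stars_slack m)).+1.

Lemma stars_slack_lt_excess m : stars_slack m < (stars_excess m)%:R.
Proof. exact: truncnS_gt. Qed.

Definition stars_witnesses (X : {set 'I_n}) (F : {set {set 'I_n}}) : {set {set star}} :=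
  [set S : {set star} | S \subset setX X F & #|S| == stars_excess #|F|].

Lemma card_stars_witnesses X F :
  #|stars_witnesses X F| = 'C(#|X| * #|F|, stars_excess #|F|).
Proof. by rewrite cards_draws cardsX. Qed.

Lemma stars_premise_family X F : stars_premise X F -> star_family Delta X F.
Proof. by case/andP => /andP[/andP[/andP[fam triv] _] _] _; rewrite /star_family fam triv. Qed.

Lemma not_stars_good_witness E : ~~ stars_good Delta nu xi p E ->
  exists X F S,
    [&& stars_premise X F, S \in stars_witnesses X F & S \subset starset E X F].
Proof.
move/forallPn => [X /forallPn [F]]; rewrite negb_imply -ltNge => /andP[premXF many].
have q0 : 0 <= p ^+ Delta by case/andP: p01 => p0 _; rewrite exprn_ge0.
have [S SE cardS] : exists2 S : {set star}, S \subset starset E X F & #|S| = stars_excess #|F|.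
  apply: exists_subset_card; rewrite /stars_excess truncn_lt_nat ?mulr_ge0 //.
  apply: le_lt_trans many.
  by rewrite lerDr !mulr_ge0.
exists X, F, S; apply/and3P; split => //; rewrite inE cardS eqxx andbT.
exact: subset_trans SE (starset_subX _ _ _).
Qed.

Lemma gnp_prob_spoke_edges X F S : stars_premise X F -> S \in stars_witnesses X F ->
  gnp_prob p (fun E => spoke_edges S \subset E) = p ^+ Delta ^+ stars_excess #|F|.
Proof.
move=> /stars_premise_family famF; rewrite inE => /andP[SXF /eqP <-].
rewrite gnp_prob_supset ?(spoke_edges_pairs famF SXF) //.
by rewrite (card_spoke_edges famF SXF) mulnC exprM.
Qed.

Lemma gnp_prob_not_stars_good_le :
  gnp_prob p (fun E : {set {set 'I_n}} => ~~ stars_good Delta nu xi p E) <=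
  \sum_(X : {set 'I_n}) \sum_(F | stars_premise X F)
     'C(#|X| * #|F|, stars_excess #|F|)%:R * p ^+ Delta ^+ stars_excess #|F|.
Proof.
under eq_bigr => X _ do under eq_bigr => F _ do
  rewrite mulr_natl -card_stars_witnesses -sumr_const.
under eq_bigr => X _ do rewrite pair_big_dep.
rewrite pair_big_dep /=.
pose P i := stars_premise i.1 i.2.1 && (i.2.2 \in stars_witnesses i.1 i.2.1).
apply: le_trans (gnp_prob_union_le p01 (P := P)
  (A := fun i E => spoke_edges i.2.2 \subset E) _) _.
  move=> E _ /not_stars_good_witness [X [F [S /and3P[premXF SW SE]]]].
  by exists (X, (F, S)); rewrite /P /= ?premXF ?SW ?(spoke_edges_sub SE).
apply: ler_sum => -[X [F S]] /andP[premXF SW] /=.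
by rewrite (gnp_prob_spoke_edges premXF SW).
Qed.

End FirstMoment.

Lemma leq_ffact_exp N s : (N ^_ s <= N ^ s)%N.
Proof.
rewrite ffact_prod; apply: (@leq_trans (\prod_(i < s) N)).
  by apply: leq_prod => i _; rewrite leq_subr.
by rewrite prod_nat_const card_ord.
Qed.

Lemma leq_bin_exp N s : ('C(N, s) <= N ^ s)%N.
Proof.
apply: leq_trans (leq_ffact_exp N s).
by rewrite -bin_ffact leq_pmulr // fact_gt0.
Qed.

Section BinomialEstimates.
Variable R : realType.

Lemma expR1_le4 : expR 1 <= 4 :> R.
Proof.
have half_le : expR (1 / 2) <= 2 :> R.
  have := expR_ge1Dx (- (1 / 2) : R); rewrite expRN.
  have e0 := expR_gt0 (1 / 2 : R).
  have : expR (1/2) * (expR (1/2))^-1 = 1 :> R by rewrite mulfV // gt_eqF.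
  nra.
have -> : (1 : R) = 2%:R * (1 / 2) by rewrite mul1r mulfV // pnatr_eq0.
rewrite expRM_natl expr2.
have := expR_ge0 (1 / 2 : R); nra.
Qed.

(* [s^s / s! <= e^s] is a single term of the exponential series. *)
Lemma exp_self_le_fact s : s%:R ^+ s <= 4 ^+ s * s`!%:R :> R.
Proof.
case: s => [|m]; first by rewrite !expr0 mul1r.
have fact0 : (0 : R) < m.+1`!%:R by rewrite ltr0n fact_gt0.
rewrite -ler_pdivrMr //; apply: le_trans (_ : expR m.+1%:R <= _).
  by apply: le_trans (expR_ge1Dxn m (ler0n _ _)); rewrite lerDr.
rewrite -[X in expR X]mulr1 expRM_natl.
by rewrite lerXn2r ?nnegrE ?expR_ge0 // expR1_le4.
Qed.

Lemma bin_le_div_exp N s : (0 < s)%N -> 'C(N, s)%:R <= (4 * N%:R / s%:R) ^+ s :> R.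
Proof.
move=> s0; rewrite expr_div_n ler_pdivlMr ?exprn_gt0 ?ltr0n //.
apply: (@le_trans _ _ ('C(N, s)%:R * (4 ^+ s * s`!%:R))).
  by rewrite ler_wpM2l // exp_self_le_fact.
rewrite mulrCA -[_%:R * s`!%:R]natrM bin_ffact exprMn ler_wpM2l ?exprn_ge0 //.
by rewrite -natrX ler_nat leq_ffact_exp.
Qed.

Lemma exp_split_le (a t : R) (A k s : nat) : 0 <= a -> 0 <= t <= 2 / 3 ->
  (0 < A)%N -> (A * k <= s)%N -> a * t * (2 / 3) ^+ A.-1 <= 1 ->
  a ^+ k * t ^+ s <= (2 / 3) ^+ (s - A * k).
Proof.
move=> a0 /andP[t0 t23] A0 Aks at1.
rewrite -(subnKC Aks) exprD mulrA exprM -exprMn addKn.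
rewrite -[X in _ <= X]mul1r ler_pM ?exprn_ge0 ?mulr_ge0 ?exprn_ge0 //; last first.
  by rewrite lerXn2r ?nnegrE //; lra.
apply: exprn_ile1; first by rewrite !mulr_ge0 // exprn_ge0.
rewrite -(prednK A0) exprS mulrA; apply: le_trans at1.
by rewrite ler_wpM2l ?mulr_ge0 // lerXn2r ?nnegrE //; lra.
Qed.

(* With [a = 4 n / k] and [t = 2 k / (3 xi n)], [C(n, k) <= a^k],
   [C(k m, s) q^s <= t^s], and [a t = 8 / (3 xi)]. *)
Lemma bin_witnesses_le (n k m s A : nat) (xi q : R) :
  (0 < k)%N -> (0 < A)%N -> 0 < xi -> 0 <= q ->
  k%:R <= xi * n%:R ->
  (2 * A * k)%:R <= 6 * xi * n%:R * q * m%:R ->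
  6 * xi * n%:R * q * m%:R < s%:R ->
  8 / (3 * xi) * (2 / 3) ^+ A.-1 <= 1 ->
  'C(n, k)%:R * 'C(k * m, s)%:R * q ^+ s <= (2 / 3) ^+ (s - A * k) :> R.
Proof.
move=> k0 A0 xi0 q0 kxn Akz zs hA.
set z := 6 * xi * n%:R * q * m%:R in Akz zs.
have kR : (0 : R) < k%:R by rewrite ltr0n.
have nR : (0 : R) < n%:R.
  by have := lt_le_trans kR kxn; rewrite pmulr_rgt0.
have z0 : 0 <= z by rewrite !mulr_ge0 // ltW.
have sR : (0 : R) < s%:R := le_lt_trans z0 zs.
have Aks : (A * k <= s)%N.
  rewrite -(ler_nat R); apply: ltW; apply: le_lt_trans zs; apply: le_trans Akz.
  by rewrite ler_nat -mulnA leq_pmull.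
pose a : R := 4 * n%:R / k%:R.
pose t : R := 2 * k%:R / (3 * xi * n%:R).
have a0 : 0 <= a by rewrite !mulr_ge0 // ?invr_ge0 ltW.
have t0 : 0 <= t by rewrite !mulr_ge0 // invr_ge0 !mulr_ge0 // ltW.
have t23 : t <= 2 / 3 by rewrite ler_pdivrMr ?mulr_gt0 //; lra.
have at_eq : a * t = 8 / (3 * xi) by rewrite /a /t; field; rewrite !gt_eqF.
have qt : 4 * (k * m)%:R / s%:R * q <= t.
  rewrite mulrAC ler_pdivrMr //; apply: le_trans (_ : t * z <= _); last first.
    by rewrite ler_wpM2l // ltW.
  by rewrite /t /z natrM le_eqVlt; apply/orP; left; apply/eqP; field; rewrite !gt_eqF.
rewrite -mulrA; apply: le_trans (exp_split_le (t := t) a0 _ A0 Aks _); last 2 first.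
- by rewrite t0 t23.
- by rewrite at_eq.
apply: ler_pM; rewrite ?mulr_ge0 ?exprn_ge0 //; first exact: bin_le_div_exp.
apply: le_trans (_ : (4 * (k * m)%:R / s%:R * q) ^+ s <= _).
  by rewrite exprMn ler_wpM2r ?exprn_ge0 // bin_le_div_exp // -(ltr0n R).
by rewrite lerXn2r // nnegrE !mulr_ge0 // invr_ge0 ltW.
Qed.

End BinomialEstimates.

Section Sums.
Variable R : realType.

Lemma sum_subset_card (T : finType) (A : {set T}) (f : nat -> R) :
  \sum_(B : {set T} | B \subset A) f #|B| = \sum_(k < #|A|.+1) 'C(#|A|, k)%:R * f k.
Proof.
rewrite (partition_big (fun B : {set T} => (inord #|B| : 'I_(#|A|.+1))) xpredT) //=.
apply: eq_bigr => k _.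
rewrite (eq_bigr (fun _ => f k)) => [|B /andP[BA /eqP <-]]; last first.
  by rewrite inordK // ltnS subset_leq_card.
rewrite sumr_const -cards_draws mulr_natl; congr (_ *+ _).
apply: eq_card => B; rewrite !inE /=.
apply/andP/andP => -[BA cardB]; split => //.
  by move/eqP: cardB => <-; rewrite inordK // ltnS subset_leq_card.
by apply/eqP/val_inj; rewrite /= inordK ?(eqP cardB) // ltnS -(eqP cardB) subset_leq_card.
Qed.

Lemma sum_expr_half_le2 M : \sum_(m < M) (1 / 2 : R) ^+ m <= 2.
Proof.
elim: M => [|M IH]; first by rewrite big_ord0; lra.
rewrite big_ord_recl expr0.
under eq_bigr do rewrite exprS.
rewrite -big_distrr /=; lra.
Qed.

Lemma bernoulli_le (x : R) j : 0 <= x -> 1 + j%:R * x <= (1 + x) ^+ j.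
Proof.
move=> x0; elim: j => [|j IH]; first by rewrite mul0r addr0 expr0.
rewrite exprS; apply: le_trans (_ : (1 + x) * (1 + j%:R * x) <= _).
  have : 0 <= j%:R * x * x by rewrite !mulr_ge0.
  rewrite -natr1; nra.
by rewrite ler_wpM2l // addr_ge0.
Qed.

Lemma two3_exp_le_expR (r : nat) (Y : R) : Y <= r%:R ->
  (2 / 3 : R) ^+ r <= expR (- (ln (3 / 2) * Y)).
Proof.
move=> Yr; have -> : (2 / 3 : R) = expR (- ln (3 / 2)).
  by rewrite expRN lnK ?invf_div // posrE; lra.
rewrite -expRM_natl ler_expR mulrN lerN2 [leRHS]mulrC ler_wpM2l //.
by apply/ltW/ln_gt0; lra.
Qed.

Lemma expRN_mul_ln_nat (n a : nat) : (0 < n)%N ->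
  expR (- (a%:R * ln n%:R)) = (n%:R ^+ a)^-1 :> R.
Proof. by move=> n0; rewrite expRN expRM_natl lnK // posrE ltr0n. Qed.

Lemma inv_exp_sqr_le (x : R) m : 2 <= x -> (0 < m)%N ->
  ((x ^+ 2) ^+ m)^-1 <= 2 * (x ^+ 2)^-1 * (1 / 2) ^+ m.
Proof.
move=> x2 m0.
have x0 : 0 < x ^+ 2 by rewrite exprn_gt0 //; lra.
set y := (x ^+ 2)^-1.
have y0 : 0 <= y by rewrite /y invr_ge0 ltW.
have y2 : y <= 1 / 2 by rewrite /y -div1r ler_pdivrMr // expr2; nra.
rewrite -exprVn -/y -(prednK m0) !exprS mulrA.
have : y ^+ m.-1 <= (1 / 2) ^+ m.-1 by rewrite lerXn2r // nnegrE; lra.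
have : 0 <= y ^+ m.-1 by rewrite exprn_ge0.
nra.
Qed.

End Sums.

Section FirstMomentBound.
Variables (R : realType) (n Delta A : nat) (p xi cD : R).
Hypotheses (n2 : (2 <= n)%N) (A0 : (0 < A)%N) (xi0 : 0 < xi) (p01 : 0 <= p <= 1)
  (A_large : 8 / (3 * xi) * (2 / 3) ^+ A.-1 <= 1)
  (cD_large : (Delta + 2)%:R <= 3 * xi * cD * ln (3 / 2))
  (np_large : cD * ln n%:R <= n%:R * p ^+ Delta).

Local Notation nu := (3 * xi / A%:R).
Local Notation slack := (stars_slack n Delta p xi).
Local Notation excess := (stars_excess n Delta p xi).

Let n_gt0 : (0 < n)%N. Proof. exact: leq_trans n2. Qed.
Let nR_gt0 : (0 : R) < n%:R. Proof. by rewrite ltr0n. Qed.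
Let q_ge0 : 0 <= p ^+ Delta. Proof. by case/andP: p01 => p0 _; rewrite exprn_ge0. Qed.

(* The union-bound summand for [|X| = k] and [|F| = m], keeping only the two
   constraints of [stars_premise] on [k]. *)
Definition stars_term (k m : nat) : R :=
  if (k%:R <= xi * n%:R) && (k%:R <= nu * n%:R * p ^+ Delta * m%:R)
  then 'C(k * m, excess m)%:R * p ^+ Delta ^+ excess m else 0.

Lemma stars_term_ge0 k m : 0 <= stars_term k m.
Proof. by rewrite /stars_term; case: ifP => // _; rewrite mulr_ge0 // exprn_ge0. Qed.

Lemma stars_slack_ge k m : k%:R <= nu * n%:R * p ^+ Delta * m%:R ->
  (2 * A * k)%:R <= slack m.
Proof.
move=> kn; have AR : (0 : R) < A%:R by rewrite ltr0n.
rewrite !natrM; apply: le_trans (_ : 2%:R * A%:R * (nu * n%:R * p ^+ Delta * m%:R) <= _).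
  by rewrite ler_wpM2l // mulr_ge0 // ltW.
by rewrite /stars_slack le_eqVlt; apply/orP; left; apply/eqP; field; rewrite gt_eqF.
Qed.

(* [excess m - A k >= slack m / 2 >= 3 xi m cD ln n], and by the choice of
   [cD] this exponent beats [n ^ ((Delta + 2) m)]. *)
Lemma two3_excess_le k m : (2 * A * k)%:R <= slack m ->
  (2 / 3 : R) ^+ (excess m - A * k) <= (n%:R ^+ ((Delta + 2) * m))^-1.
Proof.
move=> Akz; have zs := stars_slack_lt_excess n Delta p xi m.
have Aks : (A * k <= excess m)%N.
  rewrite -(ler_nat R); apply: ltW; apply: le_lt_trans zs; apply: le_trans Akz.
  by rewrite ler_nat -mulnA leq_pmull.
set Y := 3 * xi * m%:R * (cD * ln n%:R).
have Yr : Y <= (excess m - A * k)%:R.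
  have : (A * k)%:R <= slack m / 2.
    by rewrite ler_pdivlMr //; apply: le_trans Akz; rewrite mulrC -natrM mulnA.
  have : Y <= slack m / 2.
    apply: le_trans (_ : 3 * xi * m%:R * (n%:R * p ^+ Delta) <= _).
      by rewrite ler_wpM2l // !mulr_ge0 // ltW.
    by rewrite le_eqVlt; apply/orP; left; apply/eqP; rewrite /stars_slack; field.
  rewrite natrB //; lra.
apply: le_trans (two3_exp_le_expR Yr) _.
rewrite -expRN_mul_ln_nat // ler_expR lerN2 /Y natrM.
have mln0 : 0 <= m%:R * ln (n%:R : R) by rewrite mulr_ge0 // ln_ge0 // ler1n.
apply: le_trans (_ : 3 * xi * cD * ln (3 / 2) * (m%:R * ln n%:R) <= _).
  by rewrite -mulrA ler_wpM2r.
by rewrite le_eqVlt; apply/orP; left; apply/eqP; ring.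
Qed.

Lemma stars_term_le k m :
  'C(n, k)%:R * ('C('C(n, Delta), m)%:R * stars_term k m) <=
  2 * (n%:R ^+ 2)^-1 * (1 / 2) ^+ m.
Proof.
have rhs0 : 0 <= 2 * (n%:R ^+ 2)^-1 * (1 / 2 : R) ^+ m.
  by rewrite !mulr_ge0 ?exprn_ge0 ?invr_ge0 ?exprn_ge0 // ltW.
rewrite /stars_term; case: ifP => [/andP[kx kn] | _]; last by rewrite !mulr0.
have [->|k0] := posnP k; first by rewrite mul0n bin0n mul0r !mulr0.
have [->|m0] := posnP m; first by rewrite muln0 bin0n mul0r !mulr0.
have Akz := stars_slack_ge kn.
have witnesses_le := bin_witnesses_le k0 A0 xi0 q_ge0 kx Akz
  (stars_slack_lt_excess n Delta p xi m) A_large.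
have families_le : 'C('C(n, Delta), m)%:R <= n%:R ^+ (Delta * m) :> R.
  rewrite -natrX ler_nat; apply: leq_trans (leq_bin_exp _ _) _.
  by rewrite expnM leq_exp2r // leq_bin_exp.
rewrite mulrCA [X in _ * X]mulrA.
apply: le_trans (_ : n%:R ^+ (Delta * m) * (n%:R ^+ ((Delta + 2) * m))^-1 <= _).
  have w0 : 0 <= 'C(n, k)%:R * 'C(k * m, excess m)%:R * p ^+ Delta ^+ excess m.
    by rewrite !mulr_ge0 // exprn_ge0.
  apply: ler_pM (ler0n _ _) w0 families_le _.
  exact: le_trans witnesses_le (two3_excess_le Akz).
rewrite mulnDl exprD invfM mulrA mulfV ?expf_neq0 ?gt_eqF // [leLHS]mul1r exprM.
by apply: inv_exp_sqr_le => //; rewrite (ler_nat R 2 n).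
Qed.

Lemma sum_stars_premise_le :
  \sum_(X : {set 'I_n}) \sum_(F | stars_premise Delta p nu xi X F)
     'C(#|X| * #|F|, excess #|F|)%:R * p ^+ Delta ^+ excess #|F|
  <= 8 / n%:R.
Proof.
pose Ds := [set f : {set 'I_n} | #|f| == Delta].
apply: (@le_trans _ _ (\sum_(X : {set 'I_n}) \sum_(F : {set {set 'I_n}} | F \subset Ds) stars_term #|X| #|F|)).
  apply: ler_sum => X _.
  apply: le_trans (_ : \sum_(F | stars_premise Delta p nu xi X F) stars_term #|X| #|F| <= _).
    apply: ler_sum => F /andP[/andP[/andP[_ kn] kx] _].
    by rewrite /stars_term kn kx.
  apply: ler_sum_predW => [F /andP[/andP[/andP[/andP[/forall_inP famF _] _] _] _]|F _].
    by apply/subsetP => f fF; rewrite inE; case/andP: (famF f fF).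
  exact: stars_term_ge0.
under eq_bigr do rewrite sum_subset_card.
have -> : #|Ds| = 'C(n, Delta) by rewrite card_draws card_ord.
rewrite (eq_bigl (fun X : {set 'I_n} => X \subset setT)) => [|X]; last by rewrite subsetT.
rewrite (sum_subset_card _
  (fun k => \sum_(m < 'C(n, Delta).+1) 'C('C(n, Delta), m)%:R * stars_term k m)).
rewrite cardsT card_ord.
apply: le_trans (_ : \sum_(k < n.+1) (4 * (n%:R ^+ 2)^-1) <= _).
  apply: ler_sum => k _; rewrite big_distrr /=.
  apply: le_trans (_ : \sum_(m < 'C(n, Delta).+1) 2 * (n%:R ^+ 2)^-1 * (1 / 2) ^+ m <= _).
    by apply: ler_sum => m _; exact: stars_term_le.
  rewrite -big_distrr /=.
  have y0 : 0 <= 2 * (n%:R ^+ 2)^-1 :> R by rewrite mulr_ge0 // invr_ge0 exprn_ge0 // ltW.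
  apply: le_trans (ler_wpM2l y0 (sum_expr_half_le2 _ _)) _.
  by rewrite le_eqVlt; apply/orP; left; apply/eqP; ring.
rewrite sumr_const card_ord -[_ *+ n.+1]mulr_natr -[n.+1]addn1 natrD.
have nV_le1 : (n%:R)^-1 <= 1 :> R by rewrite invf_le1 // ler1n.
have -> : 8 / n%:R = 4 / n%:R * 2 :> R by field; rewrite gt_eqF.
have -> : 4 * (n%:R ^+ 2)^-1 * (n%:R + 1%:R) = 4 / n%:R * (1 + (n%:R)^-1) :> R.
  by field; rewrite gt_eqF.
rewrite ler_wpM2l ?divr_ge0 ?ler0n //; lra.
Qed.

End FirstMomentBound.

Lemma exists_two3_exp_le (R : realType) (M : R) :
  exists2 A : nat, (0 < A)%N & M * (2 / 3) ^+ A.-1 <= 1.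
Proof.
exists (Num.truncn (2 * M)).+2 => //=; set j := (Num.truncn (2 * M)).+1.
have Mj : M <= (3 / 2 : R) ^+ j.
  have := @bernoulli_le R (1 / 2) j ltac:(lra).
  have : 2 * M < j%:R by exact: truncnS_gt.
  have -> : (3 / 2 : R) = 1 + 1 / 2 by lra.
  lra.
have inv_j : (2 / 3 : R) ^+ j * (3 / 2) ^+ j = 1.
  by rewrite -exprMn (_ : 2 / 3 * (3 / 2) = 1 :> R) ?expr1n //; field.
have : (0 : R) <= (2 / 3) ^+ j by rewrite exprn_ge0 //; lra.
nra.
Qed.

Lemma exists_stars_const (R : realType) (Delta : nat) (xi : R) :
  (0 < Delta)%N -> 0 < xi ->
  exists2 c : R, 0 < c & (Delta + 2)%:R <= 3 * xi * c ^+ Delta * ln (3 / 2).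
Proof.
move=> D0 xi0; have L0 : (0 : R) < 3 * xi * ln (3 / 2).
  by rewrite !mulr_gt0 // ln_gt0 //; lra.
set c := 1 + (Delta + 2)%:R / (3 * xi * ln (3 / 2)).
have c1 : 1 <= c by rewrite lerDl divr_ge0 // ltW.
exists c; first exact: lt_le_trans c1.
rewrite mulrAC; apply: le_trans (_ : 3 * xi * ln (3 / 2) * c <= _); last first.
  by rewrite ler_wpM2l ?(ltW L0) //; exact: ler_eXnr.
rewrite mulrDr mulr1 mulrCA mulfV ?gt_eqF // mulr1 lerDr; exact: ltW.
Qed.

Lemma powR_inv_le_expr (R : realType) (c x y : R) (D : nat) :
  (0 < D)%N -> 0 <= c -> 0 <= x -> c * x `^ D%:R^-1 <= y -> c ^+ D * x <= y ^+ D.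
Proof.
move=> D0 c0 x0 le_y.
have root_x : (x `^ D%:R^-1) ^+ D = x.
  rewrite -powR_mulrn ?powR_ge0 // -powRrM mulVf ?pnatr_eq0 -?lt0n //.
  by rewrite powRr1.
have y0 : 0 <= y := le_trans (mulr_ge0 c0 (powR_ge0 _ _)) le_y.
by rewrite -[in leLHS]root_x -exprMn lerXn2r ?nnegrE ?mulr_ge0 ?powR_ge0.
Qed.

Local Open Scope classical_set_scope.
Local Open Scope ring_scope.

Lemma cvg0_le_div_nat (R : realType) (u : nat -> R) (C : R) :
  (\forall n \near \oo, 0 <= u n <= C / n%:R) -> u @ \oo --> 0.
Proof.
move=> u_le; apply: (@squeeze_cvgr _ _ _ _ (fun=> 0) (fun n => 2 * C * harmonic n)).
- near=> n; have : 0 <= u n <= C / n%:R by near: n.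
  case/andP=> u0 uC.
  have n1 : (1 <= n)%N by near: n; exact: nbhs_infty_ge.
  have C0 : 0 <= C.
    by have := le_trans u0 uC; rewrite pmulr_lge0 // invr_gt0 ltr0n.
  rewrite u0 /=; apply: le_trans uC _.
  rewrite /harmonic /= ler_pdivrMr ?ltr0n // mulrAC ler_pdivlMr ?ltr0n // -natr1.
  have : (1 : R) <= n%:R by rewrite ler1n.
  nra.
- exact: cvg_cst.
- have := cvgM (cvg_cst (2 * C)) (@cvg_harmonic R).
  by rewrite mulr0; apply.
Unshelve. all: by end_near.
Qed.

Theorem lemma6p3 (R : realType) (Delta : nat) (xi : R) :
  (0 < Delta)%N -> 0 < xi ->
  exists nu c : R, 0 < nu /\ 0 < c /\
    forall p : nat -> R,
      (forall n, 0 <= p n <= 1) ->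
      (\forall n \near \oo, c * (ln (n%:R) / n%:R) `^ (Delta%:R^-1) <= p n) ->
      gnp_prob (p n) (stars_good Delta nu xi (p n) (n := n)) @[n --> \oo] --> (1 : R).
Proof.
move=> D0 xi0.
have [A A0 A_large] := exists_two3_exp_le (8 / (3 * xi) : R).
have [c c0 c_large] := exists_stars_const D0 xi0.
set nu := 3 * xi / A%:R.
exists nu, c; split; first by rewrite /nu divr_gt0 ?mulr_gt0 ?ltr0n.
split => // p p01 p_ge.
rewrite (_ : (fun n => _) = fun n => 1 - gnp_prob (p n)
  (fun E : {set {set 'I_n}} => ~~ stars_good Delta nu xi (p n) E)); last first.
  by apply: funext => n; rewrite gnp_probC.
rewrite -[X in _ --> X]subr0; apply: cvgB; first exact: cvg_cst.
apply: (@cvg0_le_div_nat _ _ 8); near=> n.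
have n2 : (2 <= n)%N by near: n; exact: nbhs_infty_ge.
have np_large : c ^+ Delta * ln n%:R <= n%:R * p n ^+ Delta.
  have nR : (0 : R) < n%:R by rewrite ltr0n; exact: leq_trans n2.
  rewrite [leRHS]mulrC -ler_pdivrMr // -mulrA; apply: powR_inv_le_expr (ltW c0) _ _ => //.
    by rewrite divr_ge0 ?ln_ge0 ?ler1n ?ltW //; exact: leq_trans n2.
  by near: n.
rewrite gnp_prob_ge0 //=.
apply: le_trans (gnp_prob_not_stars_good_le n Delta nu (p01 n) (ltW xi0)) _.
exact: sum_stars_premise_le n2 A0 xi0 (p01 n) A_large c_large np_large.
Unshelve. all: by end_near.
Qed.
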